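(* Let $q\in[0,1)$ and let $R$ be a matrix-valued rational function analytic at the origin. Suppose $R(z)=C(I_N-zA)^{-1}B=C'(I_{N'}-zA')^{-1}B'$ near the origin for two (not necessarily minimal) realizations. Then, near the origin, \[ C\prod_{j=0}^\infty\bigl(I_N-z(1-q)q^jA\bigr)^{-1}B=C'\prod_{j=0}^\infty\bigl(I_{N'}-z(1-q)q^jA'\bigr)^{-1}B' , \] i.e. the function $T(R)(z,q)=C\prod_{j=0}^\infty(I_N-z(1-q)q^jA)^{-1}B$ does not depend on the chosen realization.
   Context: Convention $q^0=1$. Matrices have compatible sizes: $C\in\mathbb C^{n\times N}$, $A\in\mathbb C^{N\times N}$, $B\in\mathbb C^{N\times m}$, similarly for the primed triple. *)

From HB Require Import structures.
From mathcomp Require Import all_boot all_order all_algebra.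
From mathcomp Require Import complex.
From mathcomp Require Import all_classical all_reals all_analysis.
Set Implicit Arguments. Unset Strict Implicit. Unset Printing Implicit Defensive.
Import Order.TTheory GRing.Theory Num.Theory.
Import numFieldNormedType.Exports.
Local Open Scope ring_scope.
Local Open Scope complex_scope.

(* Equip the concrete complex numbers R[i] (R : realType) with the canonical
   normed-module / topological structure of a numClosedFieldType, exactly as
   MathComp-Analysis does generically in [numFieldNormedType]. *)
Section ComplexNormed.
Variable (R : realType).
HB.instance Definition _ := GRing.ComAlgebra.copy R[i] (R[i])^o.
HB.instance Definition _ := Vector.copy R[i] (R[i])^o.
HB.instance Definition _ := NormedModule.copy R[i] (R[i])^o.
HB.instance Definition _ := Num.ClosedField.on R[i].
End ComplexNormed.

Definition qfactor (R : realType) (N : nat) (q : R) (A : 'M[R[i]]_N)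
  (z : R[i]) (j : nat) : 'M[R[i]]_N :=
  invmx (1%:M - (z * (1 - q%:C) * (q%:C) ^+ j) *: A).

Fixpoint qpartial (R : realType) (N : nat) (q : R) (A : 'M[R[i]]_N)
  (z : R[i]) (n : nat) : 'M[R[i]]_N :=
  match n with
  | 0 => 1%:M
  | n.+1 => qpartial q A z n *m qfactor q A z n
  end.

From HB Require Import structures.
From mathcomp Require Import all_boot all_order all_algebra.
From mathcomp Require Import complex.
From mathcomp Require Import all_classical all_reals all_analysis.
From mathcomp Require Import lra ring.
Import Order.TTheory GRing.Theory Num.Theory.
Import numFieldNormedType.Exports.
Import Normc.
Local Open Scope ring_scope.
Local Open Scope complex_scope.
Local Open Scope classical_set_scope.

(* For x at the nodes z (1 - q) q^j the sandwiched resolvent C (I - x A)^-1 B is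
   the realized function R(x), hence independent of the realization.  By the
   resolvent identity a finite product of resolvents at pairwise distinct nodes
   is a linear combination of these resolvents, with weights depending on the
   nodes only; so the sandwiched partial products of both realizations agree,
   and so do their limits.  The limits exist for small z: in the submultiplicative
   entrywise l1-norm, |z A| <= 1/2 keeps the partial products bounded (a
   Weierstrass product inequality), and consecutive ones then differ by O(q^k). *)

Section ComplexNorm.
Context {R : realType}.
Implicit Types (x y : R[i]).

Lemma normcE x : `|x| = (normc x)%:C.
Proof. by case: x. Qed.

Lemma normc_ge0 x : 0 <= normc x.
Proof. by case: x => a b; exact: sqrtr_ge0. Qed.

Lemma normc_real (r : R) : normc r%:C = `|r|.
Proof. by rewrite /normc /= expr0n /= addr0 sqrtr_sqr. Qed.

Lemma normc_Re x : `|complex.Re x| <= normc x.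
Proof.
by case: x => a b /=; rewrite -sqrtr_sqr ler_sqrt ?lerDl ?sqr_ge0 // addr_ge0 ?sqr_ge0.
Qed.

Lemma normc_Im x : `|complex.Im x| <= normc x.
Proof.
by case: x => a b /=; rewrite -sqrtr_sqr ler_sqrt ?lerDr ?sqr_ge0 // addr_ge0 ?sqr_ge0.
Qed.

Lemma normc_le_ReIm x : normc x <= `|complex.Re x| + `|complex.Im x|.
Proof.
case: x => a b /=; rewrite -[X in _ <= X]ger0_norm ?addr_ge0 // -sqrtr_sqr.
rewrite ler_sqrt ?sqr_ge0 // -[a ^+ 2]real_normK ?num_real //.
rewrite -[b ^+ 2]real_normK ?num_real //.
by have := normr_ge0 a; have := normr_ge0 b; nra.
Qed.

Lemma normc_sum {I : finType} (f : I -> R[i]) :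
  normc (\sum_i f i) <= \sum_i normc (f i).
Proof.
elim/big_ind2: _ => [|x1 x2 y1 y2 h1 h2|//]; first by rewrite normc0.
exact: le_trans (le_normcD _ _) (lerD h1 h2).
Qed.

Lemma near0_normc_lt (r : R) : 0 < r -> \forall z \near (0 : R[i]), normc z < r.
Proof.
move=> r0; apply/nbhs_ballP; exists r%:C => [|z]; first by rewrite /= ltcR.
by rewrite /ball /= sub0r normrN normcE ltcR.
Qed.

Lemma nbhs0_normcP (P : R[i] -> Prop) : (\forall z \near (0 : R[i]), P z) ->
  exists2 r : R, 0 < r & forall z, normc z < r -> P z.
Proof.
move=> /nbhs_ballP[e /= e0 hP]; exists (complex.Re e) => [|z zr].
  by move: e0; rewrite ltcE => /andP[].
apply: hP; rewrite /ball /= sub0r normrN normcE.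
move: e0; rewrite ltcE => /andP[/eqP eIm _].
by case: e eIm zr => a b /= -> zr; rewrite ltcR.
Qed.

Lemma cvg_ReIm {T : Type} {F : set_system T} {FF : Filter F} (f : T -> R[i]) (a b : R) :
  (fun t => complex.Re (f t)) @ F --> a -> (fun t => complex.Im (f t)) @ F --> b ->
  f @ F --> a +i* b.
Proof.
move=> /cvgrPdist_lt hRe /cvgrPdist_lt hIm; apply/cvgrPdist_lt => e.
rewrite ltcE => /andP[/eqP eIm eRe]; have e2 : 0 < complex.Re e / 2 by rewrite divr_gt0.
have -> : e = (complex.Re e)%:C by case: e eIm {eRe e2} => ? ? /= ->.
near=> t; rewrite normcE ltcR; apply: le_lt_trans (normc_le_ReIm _) _.
rewrite [complex.Re e]splitr ltrD // !raddfB /=; near: t; [exact: hRe|exact: hIm].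
Unshelve. all: by end_near. Qed.

Lemma cvg_real_of_dist {v e : nat -> R} : e @ \oo --> 0 ->
  (forall n k, `|v (n + k)%N - v n| <= e n) -> cvg (v @ \oo).
Proof.
move=> /cvgrPdist_lt e0 hv; apply/cauchy_cvgP/cauchy_exP => eps eps0.
have [N0 _ /(_ N0 (leqnn _)) eN0] := e0 _ eps0.
exists (v N0), N0 => // n /= /subnKC <-; rewrite /ball /= distrC.
by apply: le_lt_trans (hv _ _) (le_lt_trans (ler_norm _) _); rewrite -normrN -sub0r.
Qed.

Lemma cvg_complex_of_dist {u : nat -> R[i]} {e : nat -> R} : e @ \oo --> 0 ->
  (forall n k, normc (u (n + k)%N - u n) <= e n) -> cvg (u @ \oo).
Proof.
move=> e0 hu; apply/cvg_ex; exists (lim ((fun n => complex.Re (u n)) @ \oo) +i*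
                                  lim ((fun n => complex.Im (u n)) @ \oo)).
apply: cvg_ReIm; apply: (cvg_real_of_dist e0) => n k; apply: le_trans (hu n k);
  by rewrite -raddfB ?normc_Re ?normc_Im.
Qed.
End ComplexNorm.

Section EntrywiseNorm.
Context {R : realType}.

Definition mxnorm1 {m n : nat} (X : 'M[R[i]]_(m, n)) : R :=
  \sum_i \sum_j normc (X i j).

Lemma mxnorm1_ge0 {m n} (X : 'M[R[i]]_(m, n)) : 0 <= mxnorm1 X.
Proof. by do 2![apply: sumr_ge0 => ? _]; exact: normc_ge0. Qed.

Lemma mxnorm1D {m n} (X Y : 'M[R[i]]_(m, n)) : mxnorm1 (X + Y) <= mxnorm1 X + mxnorm1 Y.
Proof.
rewrite -big_split; apply: ler_sum => i _; rewrite -big_split.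
by apply: ler_sum => j _; rewrite mxE; exact: le_normcD.
Qed.

Lemma mxnorm1Z {m n} c (X : 'M[R[i]]_(m, n)) : mxnorm1 (c *: X) = normc c * mxnorm1 X.
Proof.
rewrite /mxnorm1 mulr_sumr; apply: eq_bigr => i _; rewrite mulr_sumr.
by apply: eq_bigr => j _; rewrite mxE normcM.
Qed.

Lemma mxnorm1_0 {m n} : mxnorm1 (0 : 'M[R[i]]_(m, n)) = 0.
Proof. by rewrite -(scale0r 0) mxnorm1Z normc0 mul0r. Qed.

Lemma mxnorm1_1 N : mxnorm1 (1%:M : 'M[R[i]]_N) = N%:R.
Proof.
rewrite /mxnorm1 -[in RHS](card_ord N) -sumr_const; apply: eq_bigr => i _.
rewrite (bigD1 i) //= big1 => [|j /negPf ji]; first by rewrite mxE eqxx normc1 addr0.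
by rewrite mxE eq_sym ji normc0.
Qed.

Lemma normc_le_mxnorm1 {m n} (X : 'M[R[i]]_(m, n)) i j : normc (X i j) <= mxnorm1 X.
Proof.
rewrite /mxnorm1 (bigD1 i) //= (bigD1 j) //= -addrA lerDl.
by rewrite addr_ge0 ?sumr_ge0 // => *; rewrite ?sumr_ge0 // => *; exact: normc_ge0.
Qed.

Lemma mxnorm1_eq0 {m n} {X : 'M[R[i]]_(m, n)} : mxnorm1 X = 0 -> X = 0.
Proof.
move=> X0; apply/matrixP => i j; rewrite mxE; apply: eq0_normc.
by apply/eqP; rewrite eq_le normc_ge0 andbT -X0 normc_le_mxnorm1.
Qed.

Lemma mxnorm1M {m n p} (X : 'M[R[i]]_(m, n)) (Y : 'M[R[i]]_(n, p)) :
  mxnorm1 (X *m Y) <= mxnorm1 X * mxnorm1 Y.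
Proof.
rewrite /mxnorm1 mulr_suml; apply: ler_sum => i _.
apply: (@le_trans _ _ (\sum_k \sum_j normc (X i j) * normc (Y j k))).
  apply: ler_sum => k _; rewrite mxE; apply: le_trans (normc_sum _) _.
  by under eq_bigr do rewrite normcM.
rewrite exchange_big mulr_suml; apply: ler_sum => j _; rewrite -mulr_sumr.
apply: ler_wpM2l; first exact: normc_ge0.
rewrite (bigD1 j) //= lerDl; do 2![apply: sumr_ge0 => ? _]; exact: normc_ge0.
Qed.

Lemma unitmx1B {m} (X : 'M[R[i]]_m) : mxnorm1 X < 1 -> 1%:M - X \in unitmx.
Proof.
move=> X1; rewrite unitmxE unitfE; apply/negP => /det0P[v v0].
rewrite mulmxBr mulmx1 => /eqP; rewrite subr_eq0 => /eqP vX.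
suff /mxnorm1_eq0 v00 : mxnorm1 v = 0 by rewrite v00 eqxx in v0.
have := mxnorm1M v X; rewrite -vX; have := mxnorm1_ge0 v; have := mxnorm1_ge0 X.
nra.
Qed.
End EntrywiseNorm.

Section MatrixConvergence.
Context {R : realType} {m n : nat}.
Implicit Types (U : nat -> 'M[R[i]]_(m, n)).

Lemma cvg_mx_entries {T : Type} {F : set_system T} {FF : Filter F}
    (f : T -> 'M[R[i]]_(m, n)) (L : 'M[R[i]]_(m, n)) :
  (forall i j, (fun t => f t i j) @ F --> L i j) -> f @ F --> L.
Proof.
move=> fL; apply/cvg_ballP => e e0.
have : \forall t \near F, forall i j, ball (L i j) e (f t i j).
  by do 2![apply: filter_forall => ?]; exact: cvg_ball.
by apply: filterS => t; split.
Qed.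

Lemma cvg_mx_of_dist {U} {e : nat -> R} : e @ \oo --> 0 ->
  (forall k l, mxnorm1 (U (k + l)%N - U k) <= e k) -> cvg (U @ \oo).
Proof.
move=> e0 hU; apply/cvg_ex; exists (\matrix_(i, j) lim ((fun k => U k i j) @ \oo)).
apply: cvg_mx_entries => i j; rewrite mxE; apply: (cvg_complex_of_dist e0) => k l.
by apply: le_trans (hU k l); have := normc_le_mxnorm1 (U (k + l)%N - U k) i j; rewrite !mxE.
Qed.

Lemma cvg_mx_telescoping U (g : nat -> R) : g @ \oo --> 0 -> (forall k, 0 <= g k) ->
  (forall k, mxnorm1 (U k.+1 - U k) <= g k - g k.+1) -> cvg (U @ \oo).
Proof.
move=> g0 g_ge0 hU; apply: (cvg_mx_of_dist g0) => k l.
suff : mxnorm1 (U (k + l)%N - U k) <= g k - g (k + l)%N.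
  by move/le_trans; apply; rewrite lerBlDr lerDl.
elim: l => [|l IH]; first by rewrite addn0 !subrr mxnorm1_0.
have -> : U (k + l.+1)%N - U k = (U (k + l).+1 - U (k + l)%N) + (U (k + l)%N - U k).
  by rewrite addnS addrA subrK.
apply: le_trans (mxnorm1D _ _) _; apply: le_trans (lerD (hU _) IH) _.
by rewrite addnS addrC addrA subrK.
Qed.

End MatrixConvergence.

Lemma cvg_mulmx_lr {R : realType} {a b c d : nat}
    (C : 'M[R[i]]_(a, b)) (B : 'M[R[i]]_(c, d)) {f : nat -> 'M[R[i]]_(b, c)} {L} :
  f @ \oo --> L -> (fun t => C *m f t *m B) @ \oo --> C *m L *m B.
Proof.
move=> fL; apply: cvg_mx_entries => i j; rewrite mxE; under eq_cvg do rewrite mxE.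
apply: cvg_big => [|l _]; first exact: add_continuous.
rewrite mxE; under eq_cvg do rewrite mxE.
apply: cvgM; last exact: cvg_cst.
apply: cvg_big => [|k _]; first exact: add_continuous.
apply: cvgM; first exact: cvg_cst.
exact: cvg_comp _ _ fL (@coord_continuous _ _ _ k l L).
Qed.

Section ResolventProducts.
Context {F : fieldType}.

Definition resolvent {N} (M : 'M[F]_N) (x : F) : 'M[F]_N := invmx (1%:M - x *: M).

Fixpoint resolvent_prod {N} (a : nat -> F) (M : 'M[F]_N) (k : nat) : 'M[F]_N :=
  if k is k'.+1 then resolvent_prod a M k' *m resolvent M (a k') else 1%:M.

Lemma resolvent_prodS {N} a (M : 'M[F]_N) k :
  resolvent_prod a M k.+1 = resolvent_prod a M k *m resolvent M (a k).
Proof. by []. Qed.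

Lemma resolvent0 {N} (M : 'M[F]_N) : resolvent M 0 = 1%:M.
Proof. by rewrite /resolvent scale0r subr0 invmx1. Qed.

Lemma resolvent_prod_incr {N} {a : nat -> F} {M : 'M[F]_N} {k : nat} :
  1%:M - a k *: M \in unitmx ->
  resolvent_prod a M k.+1 - resolvent_prod a M k = resolvent_prod a M k.+1 *m (a k *: M).
Proof.
move=> u; have -> : resolvent_prod a M k = resolvent_prod a M k.+1 *m (1%:M - a k *: M).
  by rewrite /= -mulmxA mulVmx // mulmx1.
by rewrite mulmxBr mulmx1 opprB addrC subrK.
Qed.

Lemma resolventM {N} (M : 'M[F]_N) (x y : F) : x != y ->
  1%:M - x *: M \in unitmx -> 1%:M - y *: M \in unitmx ->
  resolvent M x *m resolvent M y = (x - y)^-1 *: (x *: resolvent M x - y *: resolvent M y).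
Proof.
move=> xy ux uy; rewrite /resolvent; set Gx := invmx _; set Gy := invmx _.
suff -> : x *: Gx - y *: Gy = (x - y) *: (Gx *m Gy).
  by rewrite scalerA mulVf ?scale1r // subr_eq0.
have -> : x *: Gx - y *: Gy = Gx *m (x *: (1%:M - y *: M) - y *: (1%:M - x *: M)) *m Gy.
  rewrite mulmxBr mulmxBl -!scalemxAr -!scalemxAl mulVmx // mul1mx.
  by rewrite -mulmxA mulmxV // mulmx1.
have -> : x *: (1%:M - y *: M) - y *: (1%:M - x *: M) = (x - y) *: 1%:M.
  by rewrite !scalerBr !scalerA [y * x]mulrC opprB addrA subrK scalerBl.
by rewrite -scalemxAr mulmx1 -scalemxAl.
Qed.

Lemma resolvent_prod_partial_fractions {a : nat -> F} :
    (forall i j, a i = a j -> a i != 0 -> i = j) ->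
  forall k, exists w : nat -> F, forall N (M : 'M[F]_N),
    (forall j, 1%:M - a j *: M \in unitmx) ->
    resolvent_prod a M k.+1 = \sum_(j < k.+1) w j *: resolvent M (a j).
Proof.
move=> a_inj; elim=> [|k [w Pw]].
  by exists (fun=> 1) => N M _; rewrite big_ord1 scale1r /= mul1mx.
have [ak0|ak0] := eqVneq (a k.+1) 0.
  exists (fun j => if (j < k.+1)%N then w j else 0) => N M u.
  rewrite resolvent_prodS Pw // ak0 resolvent0 mulmx1 [RHS]big_ord_recr /= ltnn scale0r addr0.
  by apply: eq_bigr => j _; rewrite ltn_ord.
have a_neq j : (j < k.+1)%N -> a j != a k.+1.
  by move=> jk; apply: contraTneq jk => /esym/a_inj/(_ ak0) ->; rewrite ltnn.
exists (fun j => if (j < k.+1)%N then w j * a j / (a j - a k.+1)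
                 else - \sum_(l < k.+1) w l * a k.+1 / (a l - a k.+1)) => N M u.
rewrite resolvent_prodS Pw // mulmx_suml [RHS]big_ord_recr /= ltnn scaleNr scaler_suml -sumrB.
apply: eq_bigr => j _; rewrite ltn_ord -scalemxAl resolventM ?a_neq //.
by rewrite scalerA scalerBr !scalerA; congr (_ *: _ - _ *: _); rewrite mulrAC.
Qed.

Lemma resolvent_prod_transfer {a : nat -> F} {n m N N' : nat}
    {C : 'M[F]_(n, N)} {M : 'M[F]_N} {B : 'M[F]_(N, m)}
    {C' : 'M[F]_(n, N')} {M' : 'M[F]_N'} {B' : 'M[F]_(N', m)} :
    (forall i j, a i = a j -> a i != 0 -> i = j) ->
    (forall j, 1%:M - a j *: M \in unitmx) -> (forall j, 1%:M - a j *: M' \in unitmx) ->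
    (forall j, C *m resolvent M (a j) *m B = C' *m resolvent M' (a j) *m B') ->
  forall k, C *m resolvent_prod a M k.+1 *m B = C' *m resolvent_prod a M' k.+1 *m B'.
Proof.
move=> a_inj u u' CB k; have [w Pw] := resolvent_prod_partial_fractions a_inj k.
rewrite (Pw _ _ u) (Pw _ _ u') !mulmx_sumr !mulmx_suml.
by apply: eq_bigr => j _; rewrite -!scalemxAr -!scalemxAl CB.
Qed.

End ResolventProducts.

(* Recursive form of the Weierstrass product inequality
   prod_j (1 - d_j) >= 1 - sum_j d_j, with s_k the partial sums of the d_j. *)
Lemma weierstrass_growth_bound {R : realDomainType} (p s : nat -> R) :
    s 0%N = 0 -> (forall k, s k <= s k.+1) -> (forall k, s k <= 1) ->
    (forall k, 0 <= p k) -> (forall k, p k.+1 * (1 - (s k.+1 - s k)) <= p k) ->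
  forall k, p k * (1 - s k) <= p 0%N.
Proof.
move=> s0 s_incr s_le1 p_ge0 p_step; elim=> [|k IH]; first by rewrite s0 subr0 mulr1.
have s_ge0 : 0 <= s k.
  by rewrite -s0; elim: k {IH} => // k /le_trans; apply; exact: s_incr.
have d_ge0 : 0 <= s k.+1 - s k by rewrite subr_ge0.
have sk1 : 0 <= 1 - s k by rewrite subr_ge0.
have step := ler_wpM2r sk1 (p_step k).
apply: le_trans IH; apply: le_trans step; rewrite -subr_ge0.
rewrite (_ : _ - _ = p k.+1 * (s k.+1 - s k) * s k); last by ring.
by rewrite !mulr_ge0.
Qed.

Definition qnode {R : realType} (q : R) (j : nat) : R[i] := (1 - q%:C) * q%:C ^+ j.

Section QProduct.
Context {R : realType} {q : R}.
Hypotheses (q_ge0 : 0 <= q) (q_lt1 : q < 1).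

Lemma qpartialE {N} (A : 'M[R[i]]_N) z k :
  qpartial q A z k = resolvent_prod (qnode q) (z *: A) k.
Proof.
elim: k => [//|k IH] /=; rewrite IH /qfactor /resolvent scalerA.
by rewrite [_ * z]mulrC mulrA.
Qed.

Lemma qnodeE j : qnode q j = ((1 - q) * q ^+ j)%:C.
Proof. by rewrite rmorphM rmorphB rmorph1 rmorphXn. Qed.

Lemma normc_qnode j : normc (qnode q j) = (1 - q) * q ^+ j.
Proof. by rewrite qnodeE normc_real ger0_norm // mulr_ge0 ?exprn_ge0 // subr_ge0 ltW. Qed.

Lemma normc_qnode_le1 j : normc (qnode q j) <= 1.
Proof.
rewrite normc_qnode; apply: le_trans (exprn_ile1 j q_ge0 (ltW q_lt1)).
by rewrite ler_piMl ?exprn_ge0 // lerBlDr lerDl.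
Qed.

Lemma qnode_inj i j : qnode q i = qnode q j -> qnode q i != 0 -> i = j.
Proof.
have q1 : 1 - q != 0 by rewrite subr_eq0 eq_sym lt_eqF.
rewrite !qnodeE => /complexI /(mulfI q1) qij; rewrite -[0]/(0%:C) (inj_eq (@complexI _)).
rewrite mulf_eq0 negb_or q1 /=; have [q0|q0] := eqVneq q 0; last first.
  have q_gt0 : 0 < q by rewrite lt_neqAle eq_sym q0.
  by move=> _; apply: (ieexprIn q_gt0 _ qij); rewrite lt_eqF.
rewrite q0 in qij *; case: i j qij => [|i] [|j] //; rewrite !expr0n /= ?eqxx //.
by move=> /eqP; rewrite oner_eq0.
Qed.

Context {N : nat} {M : 'M[R[i]]_N}.
Hypothesis M_small : mxnorm1 M <= 1 / 2.

Local Notation P := (resolvent_prod (qnode q) M).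

Lemma qnode_unitmx j : 1%:M - qnode q j *: M \in unitmx.
Proof.
apply: unitmx1B; rewrite mxnorm1Z; apply: (@le_lt_trans _ _ (1 / 2)); last first.
  by rewrite ltr_pdivrMr // mul1r ltr1n.
by apply: le_trans M_small; rewrite ler_piMl ?mxnorm1_ge0 ?normc_qnode_le1.
Qed.

Lemma mxnorm1_qprod_le k : mxnorm1 (P k) <= 2 * N%:R.
Proof.
pose t := mxnorm1 M; have t_ge0 : 0 <= t := mxnorm1_ge0 M.
have step j : mxnorm1 (P j.+1) * (1 - normc (qnode q j) * t) <= mxnorm1 (P j).
  have e : P j.+1 = P j + P j.+1 *m (qnode q j *: M).
    by rewrite -(resolvent_prod_incr (qnode_unitmx j)) addrC subrK.
  rewrite mulrBr mulr1 lerBlDr {1}e; apply: le_trans (mxnorm1D _ _) _.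
  by rewrite lerD2l -mxnorm1Z; exact: mxnorm1M.
have qX_ge0 j : 0 <= q ^+ j := exprn_ge0 j q_ge0.
have s_le j : t * (1 - q ^+ j) <= 1 / 2.
  by apply: le_trans M_small; rewrite ler_piMr // lerBlDr lerDl.
have : mxnorm1 (P k) * (1 - t * (1 - q ^+ k)) <= mxnorm1 (P 0%N).
  apply: (weierstrass_growth_bound (fun j => mxnorm1 (P j)) (fun j => t * (1 - q ^+ j)))
    => [|j|j|j|j]; rewrite ?expr0 ?subrr ?mulr0 ?mxnorm1_ge0 //.
  - by apply: ler_wpM2l => //; rewrite lerD2l lerN2 exprS ler_piMl // ltW.
  - by apply: le_trans (s_le j) _; rewrite ler_pdivrMr // mul1r ler1n.
  - suff -> : t * (1 - q ^+ j.+1) - t * (1 - q ^+ j) = normc (qnode q j) * t by [].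
    by rewrite normc_qnode exprS; ring.
rewrite /= mxnorm1_1 => bound; have := s_le k; have := mxnorm1_ge0 (P k).
nra.
Qed.

Lemma mxnorm1_qprod_incr k :
  mxnorm1 (P k.+1 - P k) <= 2 * N%:R * mxnorm1 M * q ^+ k - 2 * N%:R * mxnorm1 M * q ^+ k.+1.
Proof.
rewrite (resolvent_prod_incr (qnode_unitmx k)); apply: le_trans (mxnorm1M _ _) _.
rewrite mxnorm1Z normc_qnode.
rewrite (_ : _ * q ^+ k - _ = 2 * N%:R * ((1 - q) * q ^+ k * mxnorm1 M)); last first.
  by rewrite exprS; ring.
by rewrite ler_wpM2r ?mxnorm1_qprod_le // !mulr_ge0 ?mxnorm1_ge0 ?exprn_ge0 // subr_ge0 ltW.
Qed.

Lemma cvg_qprod : cvg (P @ \oo).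
Proof.
apply: (cvg_mx_telescoping _ (fun k => 2 * N%:R * mxnorm1 M * q ^+ k)) => [|k|];
  last exact: mxnorm1_qprod_incr.
- rewrite -(mulr0 (2 * N%:R * mxnorm1 M)); apply: cvgM; first exact: cvg_cst.
  by apply: cvg_expr; rewrite ger0_norm.
- by rewrite !mulr_ge0 ?mxnorm1_ge0 ?exprn_ge0.
Qed.

End QProduct.

Lemma qprod_lim_transfer {R : realType} {q : R} (q_ge0 : 0 <= q) (q_lt1 : q < 1)
    {n m N N' : nat} {C : 'M[R[i]]_(n, N)} {M : 'M[R[i]]_N} {B : 'M[R[i]]_(N, m)}
    {C' : 'M[R[i]]_(n, N')} {M' : 'M[R[i]]_N'} {B' : 'M[R[i]]_(N', m)} :
    mxnorm1 M <= 1 / 2 -> mxnorm1 M' <= 1 / 2 ->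
    (forall j, C *m resolvent M (qnode q j) *m B = C' *m resolvent M' (qnode q j) *m B') ->
  C *m lim (resolvent_prod (qnode q) M @ \oo) *m B
  = C' *m lim (resolvent_prod (qnode q) M' @ \oo) *m B'.
Proof.
move=> hM hM' CB.
have tail_eq : \forall k \near \oo,
    C' *m resolvent_prod (qnode q) M' k *m B' = C *m resolvent_prod (qnode q) M k *m B.
  exists 1%N => // [[|k]] // _; apply/esym.
  exact: (resolvent_prod_transfer (qnode_inj q_ge0 q_lt1)
    (qnode_unitmx q_ge0 q_lt1 hM) (qnode_unitmx q_ge0 q_lt1 hM') CB k).
have lhs := cvg_mulmx_lr C B (cvg_qprod q_ge0 q_lt1 hM).
have rhs : (fun k => C *m resolvent_prod (qnode q) M k *m B) @ \oo
    --> C' *m lim (resolvent_prod (qnode q) M' @ \oo) *m B'.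
  exact: cvg_trans (near_eq_cvg tail_eq) (cvg_mulmx_lr C' B' (cvg_qprod q_ge0 q_lt1 hM')).
exact: cvg_unique _ lhs rhs.
Qed.

Lemma near0_mxnorm1Z_le {R : realType} {m n : nat} (A : 'M[R[i]]_(m, n)) (e : R) :
  0 < e -> \forall z \near (0 : R[i]), mxnorm1 (z *: A) <= e.
Proof.
move=> e0; have A1 : 0 < mxnorm1 A + 1 by rewrite ltr_pwDr ?mxnorm1_ge0.
apply: filterS (near0_normc_lt _ (divr_gt0 e0 A1)) => z zA.
rewrite mxnorm1Z; apply: le_trans (_ : normc z * (mxnorm1 A + 1) <= e).
  by rewrite ler_wpM2l ?normc_ge0 ?lerDl.
by rewrite -ler_pdivlMr // ltW.
Qed.

Theorem proposition7p1 (R : realType) (n m N N' : nat) (q : R)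
  (hq0 : 0 <= q) (hq1 : q < 1)
  (Rf : R[i] -> 'M[R[i]]_(n, m))
  (C : 'M[R[i]]_(n, N)) (A : 'M[R[i]]_N) (B : 'M[R[i]]_(N, m))
  (C' : 'M[R[i]]_(n, N')) (A' : 'M[R[i]]_N') (B' : 'M[R[i]]_(N', m)) :
  (\forall z \near (0 : R[i]),
      Rf z = C *m invmx (1%:M - z *: A) *m B
   /\ Rf z = C' *m invmx (1%:M - z *: A') *m B') ->
  \forall z \near (0 : R[i]),
      cvg (qpartial q A z @ \oo)
   /\ cvg (qpartial q A' z @ \oo)
   /\ C *m lim (qpartial q A z @ \oo) *m B
      = C' *m lim (qpartial q A' z @ \oo) *m B'.
Proof.
move=> /nbhs0_normcP[r r0 realizations]; have half : 0 < 1 / 2 :> R by [].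
near=> z.
have zA : mxnorm1 (z *: A) <= 1 / 2 by near: z; exact: near0_mxnorm1Z_le.
have zA' : mxnorm1 (z *: A') <= 1 / 2 by near: z; exact: near0_mxnorm1Z_le.
have zr : normc z < r by near: z; exact: near0_normc_lt.
rewrite (funext (qpartialE A z)) (funext (qpartialE A' z)).
split; first exact: (cvg_qprod hq0 hq1 zA).
split; first exact: (cvg_qprod hq0 hq1 zA').
apply: (qprod_lim_transfer hq0 hq1 zA zA') => j; rewrite /resolvent !scalerA.
have jz_r : normc (qnode q j * z) < r.
  by rewrite normcM; apply: le_lt_trans zr; rewrite ler_piMl ?normc_ge0 ?normc_qnode_le1.
by have [<- <-] := realizations _ jz_r.
Unshelve. all: by end_near. Qed.
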